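(* Let $G=(V,E)$ be a finite connected graph and let $x,y,v,w\in V$. Suppose there is a nonempty set $C\subseteq V$ with diameter $D=\max_{c,c'\in C} d(c,c')$ such that, for every two vertices $a,b\in\{x,y,v,w\}$, every shortest path between $a$ and $b$ contains a vertex of $C$. Then $\delta(x,y,v,w)\le D$.
   Context: $G$ is an undirected graph in which every edge has length $1$, and $d(a,b)$ denotes the shortest-path distance between vertices $a,b$. For vertices $x,y,v,w$, the hyperbolicity $\delta(x,y,v,w)$ of the $4$-tuple is defined as half the difference between the largest and the second largest of the three sums $d(x,y)+d(v,w)$, $d(x,v)+d(y,w)$, $d(x,w)+d(y,v)$ (if the two largest coincide, $\delta=0$). *)

From mathcomp Require Import all_boot all_order all_algebra.
Set Implicit Arguments. Unset Strict Implicit. Unset Printing Implicit Defensive.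
Import Order.TTheory GRing.Theory Num.Theory.

(* A walk from a is a
   sequence p with [path e a p]; its vertex sequence is [a :: p], its end is
   [last a p] and its length (number of edges) is [size p]. *)

Definition walkn (T : finType) (e : rel T) (a b : T) (n : nat) : bool :=
  [exists t : n.-tuple T, path e a t && (last a t == b)].

(* graph distance: the least n with a walk of length n from a to b.
   In a connected graph this least n is < #|T|, so searching 0..#|T|-1
   gives exactly the shortest-path distance. *)
Definition gdist (T : finType) (e : rel T) (a b : T) : nat :=
  find (walkn e a b) (iota 0 #|T|).

Definition shortest_path (T : finType) (e : rel T) (a b : T) (p : seq T) : Prop :=
  path e a p /\ last a p = b /\ size p = gdist e a b.

Definition set_diam (T : finType) (e : rel T) (C : {set T}) : nat :=
  \max_(c in C) \max_(c' in C) gdist e c c'.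

(* hyperbolicity of the 4-tuple (x,y,v,w): half of (largest - second largest)
   of the three distance sums *)
Definition hyperbolicity (T : finType) (e : rel T) (x y v w : T) : rat :=
  let s1 := (gdist e x y + gdist e v w)%N in
  let s2 := (gdist e x v + gdist e y w)%N in
  let s3 := (gdist e x w + gdist e y v)%N in
  let mx := maxn s1 (maxn s2 s3) in
  let mn := minn s1 (minn s2 s3) in
  let md := (s1 + s2 + s3 - mx - mn)%N in
  ((mx - md)%N)%:R / 2.

From mathcomp Require Import all_boot all_order all_algebra.
From mathcomp Require Import zify.
Import Order.TTheory GRing.Theory Num.Theory.

(* For four points [a, b, c, d] with [a != c] and [b != d], pick [c1 \in C] on
   a geodesic from [a] to [c] and [c2 \in C] on one from [b] to [d]; routing
   [a -> b] and [c -> d] through [c1] and [c2] gives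
   [d a b + d c d <= d a c + d b d + 2 d(c1, c2)].  The degenerate cases
   [a = c] or [b = d] make the two remaining pair sums equal instead.  Applied
   to all orderings of the four points, this bounds the gap between the
   largest and the second largest pair sum by [2 D]. *)

Definition top_gap (s1 s2 s3 : nat) : nat :=
  let mx := maxn s1 (maxn s2 s3) in
  let mn := minn s1 (minn s2 s3) in
  mx - (s1 + s2 + s3 - mx - mn).

Lemma top_gap_le s1 s2 s3 k :
  (s1 <= s2 + k \/ s1 = s3) -> (s1 <= s3 + k \/ s1 = s2) ->
  (s2 <= s1 + k \/ s2 = s3) -> (s2 <= s3 + k \/ s2 = s1) ->
  (s3 <= s1 + k \/ s3 = s2) -> (s3 <= s2 + k \/ s3 = s1) ->
  top_gap s1 s2 s3 <= k.
Proof.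
rewrite /top_gap; lia.
Qed.

Section FourPoint.
Context {T : eqType} {dist : T -> T -> nat} {S C : pred T} {D : nat}.
Hypothesis dist_sym : forall a b, dist a b = dist b a.
Hypothesis dist_triangle : forall a b c, dist a c <= dist a b + dist b c.
Hypothesis dist_C : {in C &, forall c c', dist c c' <= D}.
Hypothesis geodesic_C : {in S &, forall a b, a != b ->
  exists2 c, c \in C & dist a c + dist c b <= dist a b}.

Lemma pair_sum_le {a b c d} : a \in S -> b \in S -> c \in S -> d \in S ->
  dist a b + dist c d <= dist a c + dist b d + D.*2 \/
  dist a b + dist c d = dist a d + dist b c.
Proof.
move=> aS bS cS dS.
have [<-|nac] := eqVneq a c; first by right; rewrite dist_sym addnC.
have [<-|nbd] := eqVneq b d; first by right; rewrite (dist_sym c).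
left; have [c1 c1C ac] := geodesic_C _ _ aS cS nac.
have [c2 c2C bd] := geodesic_C _ _ bS dS nbd.
have := dist_C _ _ c1C c2C.
have := dist_triangle a c1 b; have := dist_triangle c1 c2 b.
have := dist_triangle c c1 d; have := dist_triangle c1 c2 d.
have := dist_sym c1 c; have := dist_sym c2 b; lia.
Qed.

Lemma four_point_top_gap x y v w : x \in S -> y \in S -> v \in S -> w \in S ->
  top_gap (dist x y + dist v w) (dist x v + dist y w) (dist x w + dist y v)
    <= D.*2.
Proof.
move=> xS yS vS wS.
have wv := dist_sym w v; have vy := dist_sym v y; have wy := dist_sym w y.
apply: top_gap_le.
- by case: (pair_sum_le xS yS vS wS); lia.
- by case: (pair_sum_le xS yS wS vS); lia.
- by case: (pair_sum_le xS vS yS wS); lia.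
- by case: (pair_sum_le xS vS wS yS); lia.
- by case: (pair_sum_le xS wS yS vS); lia.
- by case: (pair_sum_le xS wS vS yS); lia.
Qed.

End FourPoint.

Section GraphDistance.
Context {T : finType} {e : rel T}.
Hypothesis e_sym : symmetric e.
Hypothesis e_conn : forall a b : T, connect e a b.

Lemma gdist_path_le {a p} : path e a p -> gdist e a (last a p) <= size p.
Proof.
move=> ep; have walk_p : walkn e a (last a p) (size p).
  by apply/existsP; exists (in_tuple p); rewrite /= ep eqxx.
rewrite /gdist; have [small | large] := ltnP (size p) #|T|.
  rewrite leqNgt; apply/negP => /(before_find 0).
  by rewrite nth_iota // add0n walk_p.
by apply: leq_trans (find_size _ _) _; rewrite size_iota.
Qed.

(* A duplicate-free walk has fewer than [#|T|] edges, so the search in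
   [gdist] succeeds. *)
Lemma walkn_gdist a b : walkn e a b (gdist e a b).
Proof.
have [p ep ->] := connectP (e_conn a b).
have [q eq uq _] := shortenP ep.
have q_small : size q < #|T|.
  by have := max_card (mem (a :: q)); rewrite (card_uniqP uq).
have has_walk : has (walkn e a (last a q)) (iota 0 #|T|).
  apply/hasP; exists (size q); first by rewrite mem_iota.
  by apply/existsP; exists (in_tuple q); rewrite /= eq eqxx.
have := nth_find 0 has_walk; rewrite nth_iota ?add0n //.
by rewrite -{2}(size_iota 0 #|T|) -has_find.
Qed.

Lemma exists_shortest_path a b : exists p, shortest_path e a b p.
Proof.
have /existsP [t /andP [et /eqP lt]] := walkn_gdist a b.
by exists t; rewrite /shortest_path size_tuple.
Qed.

Lemma gdist_triangle a b c : gdist e a c <= gdist e a b + gdist e b c.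
Proof.
have [p [ep [lp sp]]] := exists_shortest_path a b.
have [q [eq [lq sq]]] := exists_shortest_path b c.
have := @gdist_path_le a (p ++ q).
rewrite cat_path ep lp eq last_cat lp lq size_cat sp sq; exact.
Qed.

Lemma reverse_walk {a p} : path e a p ->
  exists2 q, path e (last a p) q & last (last a p) q = a /\ size q = size p.
Proof.
elim: p a => [|z p IHp] a /=; first by exists [::].
case/andP => eaz ep; have [q eq [lq sq]] := IHp z ep.
exists (rcons q a); last by rewrite last_rcons size_rcons sq.
by rewrite rcons_path eq lq e_sym eaz.
Qed.

Lemma gdist_sym a b : gdist e a b = gdist e b a.
Proof.
suff gdist_sym_le a' b' : gdist e b' a' <= gdist e a' b'.
  by apply/eqP; rewrite eqn_leq !gdist_sym_le.
have [p [ep [lp sp]]] := exists_shortest_path a' b'.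
have [q eq [lq sq]] := reverse_walk ep.
by have := gdist_path_le eq; rewrite lq lp sq sp.
Qed.

Lemma shortest_path_geodesic {a b p c} : shortest_path e a b p -> c \in a :: p ->
  gdist e a c + gdist e c b <= gdist e a b.
Proof.
case=> ep [lp sp]; rewrite in_cons => /predU1P [-> | cp].
  by have /= := @gdist_path_le a [::] isT; rewrite leqn0 => /eqP ->.
move: ep lp sp; case/splitPr: cp => p1 p2.
rewrite cat_path /= last_cat /= => /and3P [ep1 ec ep2] lp sp.
have := @gdist_path_le a (rcons p1 c).
rewrite rcons_path ep1 ec last_rcons size_rcons.
have := gdist_path_le ep2; rewrite lp -sp size_cat /=; lia.
Qed.

End GraphDistance.

Lemma gdist_le_set_diam (T : finType) (e : rel T) (C : {set T}) :
  {in C &, forall c c', gdist e c c' <= set_diam e C}.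
Proof.
move=> c c' cC c'C; apply: leq_trans (leq_bigmax_cond _ cC).
by rewrite (bigD1 c') //= leq_maxl.
Qed.

Theorem proposition2 (T : finType) (e : rel T)
  (e_sym : symmetric e) (e_irr : irreflexive e)
  (e_conn : forall a b : T, connect e a b)
  (x y v w : T) (C : {set T}) (C_ne : C != set0)
  (hC : forall a b : T, a \in [:: x; y; v; w] -> b \in [:: x; y; v; w] ->
        a != b ->
        forall p : seq T, shortest_path e a b p -> has (mem C) (a :: p)) :
  (hyperbolicity e x y v w <= (set_diam e C)%:R)%R.
Proof.
have geodesic_C : {in [:: x; y; v; w] &, forall a b, a != b ->
    exists2 c, c \in C & gdist e a c + gdist e c b <= gdist e a b}.
  move=> a b aS bS nab; have [p sp] := exists_shortest_path e_conn a b.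
  have /hasP [c cp cC] := hC a b aS bS nab p sp.
  by exists c; last exact: shortest_path_geodesic sp cp.
have := four_point_top_gap (gdist_sym e_sym e_conn) (gdist_triangle e_conn)
  (@gdist_le_set_diam T e C) geodesic_C x y v w.
rewrite !inE !eqxx !orbT => /(_ isT isT isT isT) gap_le.
by rewrite /hyperbolicity ler_pdivrMr // -natrM ler_nat muln2.
Qed.
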